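(* Let $r\ge 3$ and $n \ge \frac{(r-1)(2r+1)}{2}$ be integers. If $\mathcal{H}$ is an $n$-vertex $r$-graph that is $\mathrm{T}_r$-free and satisfies $\delta_{r-1}^{+}(\mathcal{H}) > \frac{2n}{2r+1}$, then $\mathcal{H}$ is $r$-partite.
   Context: An $r$-graph $\mathcal{H}$ is a collection of $r$-subsets (edges) of a finite vertex set $V(\mathcal{H})$. The shadow is $\partial\mathcal{H}=\{e\in\binom{V(\mathcal{H})}{r-1}\colon e\subseteq E \text{ for some } E\in\mathcal{H}\}$. For $e\in\partial\mathcal{H}$, $N_{\mathcal{H}}(e)=\{v\in V(\mathcal{H})\colon e\cup\{v\}\in\mathcal{H}\}$. The minimum positive codegree is $\delta_{r-1}^{+}(\mathcal{H})=\min\{|N_{\mathcal{H}}(e)|\colon e\in\partial\mathcal{H}\}$. The $r$-uniform generalized triangle is $\mathrm{T}_r=\{\{1,\ldots,r-1,r\},\{1,\ldots,r-1,r+1\},\{r,r+1,\ldots,2r-1\}\}$; $\mathcal{H}$ is $\mathrm{T}_r$-free if it contains no subhypergraph isomorphic to $\mathrm{T}_r$. $\mathcal{H}$ is $r$-partite if $V(\mathcal{H})$ can be partitioned into $r$ parts $V_1,\dots,V_r$ such that every edge contains exactly one vertex from each part. *)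

From mathcomp Require Import all_boot.
Set Implicit Arguments. Unset Strict Implicit. Unset Printing Implicit Defensive.

Definition is_rgraph (T : finType) (r : nat) (H : {set {set T}}) : Prop :=
  forall E, E \in H -> #|E| = r.

Definition shadow (T : finType) (r : nat) (H : {set {set T}}) : {set {set T}} :=
  [set e : {set T} | (#|e| == r.-1) && [exists E in H, e \subset E]].

Definition nbhd (T : finType) (H : {set {set T}}) (e : {set T}) : {set T} :=
  [set v | v |: e \in H].

(* δ^+_{r-1}(H) > 2n/(2r+1), written without division:
   every e in the shadow has (2r+1)|N(e)| > 2n. *)
Definition min_pos_codeg_gt (T : finType) (r : nat) (H : {set {set T}}) : Prop :=
  forall e, e \in shadow r H -> 2 * #|T| < (2 * r + 1) * #|nbhd H e|.

(* Generalized triangle T_r on vertex set 'I_(2r-1) (0-indexed):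
   {0,..,r-2, r-1}, {0,..,r-2, r}, {r-1, r, ..., 2r-2}. *)
Definition Tr_edge1 (r : nat) : {set 'I_(2 * r - 1)} :=
  [set i : 'I_(2 * r - 1) | i <= r - 1].
Definition Tr_edge2 (r : nat) : {set 'I_(2 * r - 1)} :=
  [set i : 'I_(2 * r - 1) | (i < r - 1) || (i == r :> nat)].
Definition Tr_edge3 (r : nat) : {set 'I_(2 * r - 1)} :=
  [set i : 'I_(2 * r - 1) | r - 1 <= i].

Definition contains_Tr (T : finType) (r : nat) (H : {set {set T}}) : Prop :=
  exists f : 'I_(2 * r - 1) -> T, injective f /\
    f @: Tr_edge1 r \in H /\ f @: Tr_edge2 r \in H /\ f @: Tr_edge3 r \in H.

Definition Tr_free (T : finType) (r : nat) (H : {set {set T}}) : Prop :=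
  ~ contains_Tr r H.

Definition r_partite (T : finType) (r : nat) (H : {set {set T}}) : Prop :=
  exists p : T -> 'I_r,
    forall E, E \in H -> forall i : 'I_r, #|[set v in E | p v == i]| = 1.

(* In a T_r-free r-graph where every (r-1)-set C of the shadow has at least r
   neighbours, no edge contains two neighbours of the same C: repeatedly
   exchanging a vertex of the edge lying in C for a neighbour of the remaining
   (r-1)-set outside C keeps those two neighbours, and once the edge misses C
   the two edges through C together with it form a copy of T_r.  Hence for an
   edge G the neighbourhoods N(G \ v), v in G, are pairwise disjoint, and the
   codegree bound makes their union exceed r/(2r+1) of the vertex set; so the
   unions for any two edges and any N(C) share a vertex.  Fixing an edge E0,
   this gives every shadow set C a unique colour v in E0 such that N(C) meets
   N(E0 \ v); the colour of F \ z does not depend on the edge F through z, and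
   the colours of the vertices of any edge are exactly E0. *)

From mathcomp Require Import all_boot zify.
Set Implicit Arguments. Unset Strict Implicit. Unset Printing Implicit Defensive.

Lemma imset_nth_ord (T : finType) (x0 : T) (s : seq T) (m : nat) (P : pred nat) :
  uniq s -> size s = m ->
  (fun i : 'I_m => nth x0 s i) @: [set i : 'I_m | P i] = [set x in s | P (index x s)].
Proof.
move=> uniq_s size_s; apply/setP => x; rewrite inE; apply/imsetP/andP.
- case=> i; rewrite inE => Pi ->.
  by rewrite mem_nth ?index_uniq ?size_s.
- case=> xs Px; have lt_xm : index x s < m by rewrite -size_s index_mem.
  by exists (Ordinal lt_xm); rewrite ?inE ?nth_index.
Qed.

Lemma nth_ord_inj (T : eqType) (x0 : T) (s : seq T) (m : nat) :
  uniq s -> size s = m -> injective (fun i : 'I_m => nth x0 s i).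
Proof.
move=> uniq_s size_s i j /eqP; rewrite nth_uniq ?size_s // => /eqP; exact: val_inj.
Qed.

Lemma three_sets_meet (T : finType) (A B C : {set T}) :
  2 * #|T| < #|A| + #|B| + #|C| -> exists x, x \in A :&: B :&: C.
Proof.
move=> large; apply/set0Pn; rewrite -card_gt0.
have := cardsUI A B; have := cardsUI (A :&: B) C.
have := max_card (A :|: B); have := max_card (A :&: B :|: C); lia.
Qed.

Lemma card_bigcup_disjoint (I T : finType) (A : {set I}) (F : I -> {set T}) :
  {in A &, forall i j, i != j -> [disjoint F i & F j]} ->
  #|\bigcup_(i in A) F i| = \sum_(i in A) #|F i|.
Proof.
elim: {A}_.+1 {-2}A (ltnSn #|A|) => // m IHm A lt_Am disjF.
have [->|[i iA]] := set_0Vmem A; first by rewrite !big_set0 cards0.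
rewrite (big_setD1 i iA) (big_setD1 i iA) /= -IHm; first last.
- by move=> j k /setD1P[_ jA] /setD1P[_ kA]; apply: disjF.
- by rewrite (cardsD1 i A) iA in lt_Am.
apply/eqP; rewrite (leq_card_setU _ _).2; apply: bigcup_disjoint => j /setD1P[ji jA].
by apply: disjF; rewrite // eq_sym.
Qed.

Section TrSeq.
Variables (T : finType) (C F : {set T}) (u w : T).
Hypotheses (uC : u \notin C) (wC : w \notin C) (uw : u != w) (uF : u \in F) (wF : w \in F)
  (disjFC : [disjoint F & C]).

(* Positions 0..|C|-1 hold C, then u and w, then the rest of F: read through
   [index], the three edges of T_r become u |: C, w |: C and F. *)
Definition Tr_seq : seq T := enum C ++ u :: w :: enum (F :\ u :\ w).

Let notCF x : x \in C -> x \notin F.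
Proof. by move=> xC; apply/negP => xF; rewrite (disjointFr disjFC xF) in xC. Qed.

Lemma uniq_Tr_seq : uniq Tr_seq.
Proof.
rewrite cat_uniq !enum_uniq /= !mem_enum !inE eqxx (negbTE uC) (negbTE wC).
rewrite (negbTE uw) mem_enum !inE eqxx /= andbF enum_uniq /= andbT.
apply/hasPn => x; rewrite mem_enum !inE => /and3P[_ _ xF].
by apply/negP; rewrite mem_enum => /notCF; rewrite xF.
Qed.

Lemma mem_Tr_seq x : (x \in Tr_seq) = (x \in C) || (x \in F).
Proof.
rewrite mem_cat !inE !mem_enum !inE.
have [->|_] := eqVneq x u; first by rewrite uF !orbT.
by have [->|_] := eqVneq x w; rewrite ?wF ?orbT /= ?orbF.
Qed.

Lemma size_Tr_seq : size Tr_seq = #|C| + #|F|.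
Proof.
rewrite size_cat /= -!cardE (cardsD1 u F) (cardsD1 w (F :\ u)) uF !inE eq_sym uw wF.
by rewrite !add1n.
Qed.

Lemma index_Tr_seq_C x : x \in C -> index x Tr_seq < #|C|.
Proof. by move=> xC; rewrite index_cat mem_enum xC cardE index_mem mem_enum. Qed.

Lemma index_Tr_seq_u : index u Tr_seq = #|C|.
Proof. by rewrite index_cat mem_enum (negbTE uC) /= eqxx -cardE addn0. Qed.

Lemma index_Tr_seq_w : index w Tr_seq = #|C|.+1.
Proof. by rewrite index_cat mem_enum (negbTE wC) /= (negbTE uw) eqxx -cardE addn1. Qed.

Lemma index_Tr_seq_F x : x \in F -> x != u -> x != w -> #|C|.+1 < index x Tr_seq.
Proof.
move=> xF xu xw; rewrite index_cat mem_enum.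
have [/notCF|_] := boolP (x \in C); first by rewrite xF.
by rewrite /= !(eq_sym _ x) (negbTE xu) (negbTE xw) -cardE !addnS ltnS leq_addr.
Qed.

Lemma Tr_seq_edge1 : [set x in Tr_seq | index x Tr_seq <= #|C|] = u |: C.
Proof.
apply/setP => x; rewrite !inE mem_Tr_seq.
have [xC|_] := boolP (x \in C); first by rewrite orbT ltnW ?index_Tr_seq_C.
have [->|xu] := eqVneq x u; first by rewrite uF index_Tr_seq_u leqnn.
have [->|xw] := eqVneq x w; first by rewrite wF index_Tr_seq_w ltnn.
by case xF: (x \in F); rewrite //= leqNgt ltnW ?index_Tr_seq_F.
Qed.

Lemma Tr_seq_edge2 :
  [set x in Tr_seq | (index x Tr_seq < #|C|) || (index x Tr_seq == #|C|.+1)] = w |: C.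
Proof.
apply/setP => x; rewrite !inE mem_Tr_seq.
have [xC|_] := boolP (x \in C); first by rewrite orbT index_Tr_seq_C.
have [->|xu] := eqVneq x u.
  by rewrite uF index_Tr_seq_u ltnn (ltn_eqF (ltnSn _)) (negbTE uw).
have [->|xw] := eqVneq x w; first by rewrite wF index_Tr_seq_w eqxx !orbT.
case xF: (x \in F) => //=; have lt_index := index_Tr_seq_F xF xu xw.
by rewrite (gtn_eqF lt_index) ltnNge (ltnW (ltnW lt_index)).
Qed.

Lemma Tr_seq_edge3 : [set x in Tr_seq | #|C| <= index x Tr_seq] = F.
Proof.
apply/setP => x; rewrite !inE mem_Tr_seq.
have [xC|_] := boolP (x \in C); first by rewrite leqNgt index_Tr_seq_C ?(negbTE (notCF xC)).
have [->|xu] := eqVneq x u; first by rewrite uF index_Tr_seq_u leqnn.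
have [->|xw] := eqVneq x w; first by rewrite wF index_Tr_seq_w leqnSn.
by case xF: (x \in F); rewrite //= ltnW // ltnW ?index_Tr_seq_F.
Qed.

End TrSeq.

Lemma contains_Tr_of_edges (T : finType) (r : nat) (H : {set {set T}})
    (C F : {set T}) (u w : T) :
  #|C| = r.-1 -> #|F| = r -> u \notin C -> w \notin C -> u != w ->
  u \in F -> w \in F -> [disjoint F & C] ->
  u |: C \in H -> w |: C \in H -> F \in H -> contains_Tr r H.
Proof.
move=> cardC cardF uC wC uw uF wF disjFC uCH wCH FH.
have r_gt0 : 0 < r by rewrite -cardF; apply/card_gt0P; exists u.
have r_eq : r = #|C|.+1 by rewrite cardC prednK.
have size_s : size (Tr_seq C F u w) = 2 * r - 1.
  by rewrite size_Tr_seq // cardF r_eq mul2n -addnn addSn subn1.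
have uniq_s := uniq_Tr_seq uC wC uw disjFC.
exists (fun i => nth u (Tr_seq C F u w) i); split; first exact: nth_ord_inj.
rewrite /Tr_edge1 /Tr_edge2 /Tr_edge3 (imset_nth_ord _ (fun k => k <= r - 1)) //.
rewrite (imset_nth_ord _ (fun k => (k < r - 1) || (k == r))) //.
rewrite (imset_nth_ord _ (fun k => r - 1 <= k)) // r_eq subn1 /=.
by rewrite Tr_seq_edge1 ?Tr_seq_edge2 ?Tr_seq_edge3 -?r_eq.
Qed.

Section Hypergraph.
Variables (T : finType) (r : nat) (H : {set {set T}}).
Hypotheses (rgraphH : is_rgraph r H) (r_gt0 : 0 < r).

Lemma card_shadow (e : {set T}) : e \in shadow r H -> #|e| = r.-1.
Proof. by rewrite inE => /andP[/eqP]. Qed.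

Lemma setD1_shadow (F : {set T}) (c : T) : F \in H -> c \in F -> F :\ c \in shadow r H.
Proof.
move=> FH cF; rewrite inE; apply/andP; split.
  by move: (cardsD1 c F); rewrite cF rgraphH // add1n => ->.
by apply/existsP; exists F; rewrite FH subsetDl.
Qed.

Lemma nbhd_notin (e : {set T}) (v : T) : #|e| = r.-1 -> v \in nbhd H e -> v \notin e.
Proof.
move=> card_e; rewrite inE => /rgraphH; rewrite cardsU1 card_e.
by case: (v \in e) => //= /eqP; rewrite add0n ltn_eqF // ltn_predL.
Qed.

Lemma r_partite_of_onto (p : T -> 'I_r) :
  (forall F, F \in H -> p @: F = [set: 'I_r]) -> r_partite r H.
Proof.
move=> p_onto; exists p => F FH i.
have p_inj : {in F &, injective p}.
  by apply/imset_injP; rewrite p_onto // cardsT card_ord rgraphH.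
have /imsetP[m mF ->] : i \in p @: F by rewrite p_onto ?inE.
suff -> : [set v in F | p v == p m] = [set m] by rewrite cards1.
apply/setP => v; rewrite !inE.
apply/andP/eqP => [[vF /eqP pv]|->]; [exact: p_inj | by rewrite mF eqxx].
Qed.

Lemma r_partite_of_edge_retraction (E0 : {set T}) (x0 : T) (p : T -> T) :
  x0 \in E0 -> #|E0| = r -> (forall F, F \in H -> p @: F = E0) -> r_partite r H.
Proof.
move=> x0E0 cardE0 p_onto.
pose q u := cast_ord cardE0 (enum_rank_in x0E0 u).
have q_onto : q @: E0 = [set: 'I_r].
  apply/eqP; rewrite eqEcard subsetT cardsT card_ord card_in_imset ?cardE0 ?leqnn //.
  move=> u v uE0 vE0 /cast_ord_inj /(congr1 enum_val).
  by rewrite !enum_rankK_in.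
by apply: (r_partite_of_onto (p := q \o p)) => F FH; rewrite imset_comp p_onto.
Qed.

Section CodegreeAtLeastR.
Hypotheses (TrfreeH : Tr_free r H)
  (codeg_ge : forall e, e \in shadow r H -> r <= #|nbhd H e|).

Lemma exists_nbhd_notin (F C : {set T}) (c : T) :
  F \in H -> c \in F -> #|C| = r.-1 -> exists2 x, x \in nbhd H (F :\ c) & x \notin C.
Proof.
move=> FH cF cardC; apply/subsetPn.
apply: contraTN (codeg_ge (setD1_shadow FH cF)) => /subset_leq_card.
by rewrite cardC -ltnNge => /leq_ltn_trans; apply; rewrite ltn_predL.
Qed.

Lemma card_edge_nbhd_le1 (F C : {set T}) :
  F \in H -> #|C| = r.-1 -> #|F :&: nbhd H C| <= 1.
Proof.
move=> + cardC; elim: {F}_.+1 {-2}F (ltnSn #|F :&: C|) => // k IHk F ltFk FH.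
have [FC0|[c]] := set_0Vmem (F :&: C).
  apply/card_le1_eqP => w u /setIP[wF wN] /setIP[uF uN].
  apply/eqP/contraT => uw; exfalso; apply: TrfreeH.
  have disjFC : [disjoint F & C] by rewrite -setI_eq0 FC0.
  move: (uN) (wN); rewrite !inE => uCH wCH.
  exact: (contains_Tr_of_edges cardC (rgraphH FH) (nbhd_notin cardC uN)
    (nbhd_notin cardC wN) uw uF wF disjFC uCH wCH FH).
rewrite inE => /andP[cF cC].
have [x xN xC] := exists_nbhd_notin FH cF cardC.
have F'H : x |: F :\ c \in H by move: xN; rewrite inE.
have ltF'k : #|(x |: F :\ c) :&: C| < k.
  rewrite (cardsD1 c (F :&: C)) !inE cF cC add1n ltnS in ltFk.
  apply: leq_ltn_trans ltFk; apply/subset_leq_card/subsetP => y.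
  rewrite !inE => /andP[/orP[/eqP->|/andP[yc yF]] yC]; first by rewrite yC in xC.
  by rewrite yc yF yC.
have sub_nbhd : F :&: nbhd H C \subset (x |: F :\ c) :&: nbhd H C.
  apply/subsetP => y /setIP[yF yN]; rewrite in_setI yN andbT !inE yF andbT.
  by apply/orP; right; apply: contraNneq _ (nbhd_notin cardC yN) => ->.
exact: leq_trans (subset_leq_card sub_nbhd) (IHk _ ltF'k F'H).
Qed.

Lemma nbhd_disjoint_of_common (D1 D2 : {set T}) (z : T) :
  #|D1| = r.-1 -> #|D2| = r.-1 -> z \in nbhd H D1 -> z \in nbhd H D2 ->
  [disjoint D1 & nbhd H D2].
Proof.
move=> cardD1 cardD2 zN1 zN2; apply/pred0P => y /=; apply/negP => /andP[yD1 yN2].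
have F1H : z |: D1 \in H by move: zN1; rewrite inE.
have := card_edge_nbhd_le1 F1H cardD2; apply/negP; rewrite -ltnNge.
apply/card_gt1P; exists y, z; rewrite !in_setI yN2 zN2 !andbT !inE eqxx yD1 orbT.
split=> //.
by apply: contraNneq (nbhd_notin cardD1 zN1) => <-.
Qed.

Lemma nbhd_setD1_disjoint (E : {set T}) (v v' : T) :
  E \in H -> v \in E -> v' \in E -> v != v' ->
  [disjoint nbhd H (E :\ v) & nbhd H (E :\ v')].
Proof.
move=> EH vE v'E vv'; apply/pred0P => z /=; apply/negP => /andP[zN zN'].
have := nbhd_disjoint_of_common (card_shadow (setD1_shadow EH vE))
  (card_shadow (setD1_shadow EH v'E)) zN zN'.
by move/pred0P/(_ v'); rewrite /= !inE eq_sym vv' v'E setD1K // EH.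
Qed.

Definition edge_nbhd (G : {set T}) : {set T} := \bigcup_(v in G) nbhd H (G :\ v).

Lemma card_edge_nbhd (G : {set T}) :
  G \in H -> #|edge_nbhd G| = \sum_(v in G) #|nbhd H (G :\ v)|.
Proof.
by move=> GH; apply: card_bigcup_disjoint => v v' vG v'G; apply: nbhd_setD1_disjoint.
Qed.

Lemma nbhd_setD1_of_edge_nbhd (G C : {set T}) (a z : T) :
  G \in H -> #|C| = r.-1 -> a \in G -> a \in nbhd H C ->
  z \in edge_nbhd G -> z \in nbhd H C -> z \in nbhd H (G :\ a).
Proof.
move=> GH cardC aG aN /bigcupP[g gG zN] zC; have [<- //|ga] := eqVneq g a.
have := nbhd_disjoint_of_common (card_shadow (setD1_shadow GH gG)) cardC zN zC.
by move/pred0P/(_ a); rewrite /= in_setD1 aG eq_sym (negbTE ga) aN.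
Qed.

Section MinPositiveCodegree.
Hypothesis min_codeg : min_pos_codeg_gt r H.

Lemma edge_nbhd_large (G : {set T}) :
  G \in H -> r * (2 * #|T|).+1 <= (2 * r + 1) * #|edge_nbhd G|.
Proof.
move=> GH; rewrite card_edge_nbhd // big_distrr /= -{1}(rgraphH GH) -sum_nat_const.
by apply: leq_sum => g gG; apply/min_codeg/setD1_shadow.
Qed.

Lemma edge_nbhds_meet (G M C : {set T}) :
  G \in H -> M \in H -> C \in shadow r H ->
  exists z, z \in edge_nbhd G :&: edge_nbhd M :&: nbhd H C.
Proof.
move=> GH MH CS; apply: three_sets_meet.
have := edge_nbhd_large GH; have := edge_nbhd_large MH; have := min_codeg CS.
clear; nia.
Qed.

Section Colouring.
Variable E0 : {set T}.
Hypothesis E0H : E0 \in H.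

Definition linked (C : {set T}) (u : T) : bool :=
  [exists z in nbhd H C, z \in nbhd H (E0 :\ u)].

Lemma linked_unique (C : {set T}) (u u' : T) : C \in shadow r H ->
  u \in E0 -> u' \in E0 -> linked C u -> linked C u' -> u = u'.
Proof.
move=> CS uE u'E /exists_inP[a aC aN] /exists_inP[b bC bN]; apply/eqP/contraT => uu'.
have cardC := card_shadow CS.
have GH : a |: E0 :\ u \in H by move: aN; rewrite inE.
have MH : b |: E0 :\ u' \in H by move: bN; rewrite inE.
have [z /setIP[/setIP[zG zM] zC]] := edge_nbhds_meet GH MH CS.
have aE : a \notin E0 :\ u := nbhd_notin (card_shadow (setD1_shadow E0H uE)) aN.
have bE : b \notin E0 :\ u' := nbhd_notin (card_shadow (setD1_shadow E0H u'E)) bN.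
have zN : z \in nbhd H (E0 :\ u).
  by rewrite -(setU1K aE) (nbhd_setD1_of_edge_nbhd GH cardC (setU11 _ _) aC zG zC).
have zN' : z \in nbhd H (E0 :\ u').
  by rewrite -(setU1K bE) (nbhd_setD1_of_edge_nbhd MH cardC (setU11 _ _) bC zM zC).
by have /pred0P/(_ z) := nbhd_setD1_disjoint E0H uE u'E uu'; rewrite /= zN zN'.
Qed.

Lemma linked_exists (C : {set T}) : C \in shadow r H -> exists2 u, u \in E0 & linked C u.
Proof.
move=> CS; have [z /setIP[/setIP[/bigcupP[u uE zN] _] zC]] := edge_nbhds_meet E0H E0H CS.
by exists u => //; apply/exists_inP; exists z.
Qed.

Lemma linked_onto (F : {set T}) (w : T) :
  F \in H -> w \in E0 -> exists2 m, m \in F & linked (F :\ m) w.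
Proof.
move=> FH wE; have [z /setIP[/setIP[/bigcupP[m mF zN] _] zw]] :=
  edge_nbhds_meet FH FH (setD1_shadow E0H wE).
by exists m => //; apply/exists_inP; exists z.
Qed.

Lemma linked_transfer (F F' : {set T}) (z u : T) : F \in H -> F' \in H ->
  z \in F -> z \in F' -> u \in E0 -> linked (F' :\ z) u -> linked (F :\ z) u.
Proof.
move=> FH F'H zF zF' uE linked_u; have F'zS := setD1_shadow F'H zF'.
have [y /setIP[/setIP[/bigcupP[u' u'E yN] yF] yC]] := edge_nbhds_meet E0H FH F'zS.
have zN : z \in nbhd H (F' :\ z) by rewrite inE setD1K.
have yFz := nbhd_setD1_of_edge_nbhd FH (card_shadow F'zS) zF zN yF yC.
suff <- : u' = u by apply/exists_inP; exists y.
by apply: linked_unique F'zS u'E uE _ linked_u; apply/exists_inP; exists y.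
Qed.

(* The default [z] only matters for vertices lying in no edge. *)
Definition vertex_colour (z : T) : T :=
  odflt z [pick u in E0 | [exists F in H, (z \in F) && linked (F :\ z) u]].

Lemma vertex_colourE (F : {set T}) (z u : T) :
  F \in H -> z \in F -> u \in E0 -> linked (F :\ z) u -> vertex_colour z = u.
Proof.
move=> FH zF uE linked_u; rewrite /vertex_colour; case: pickP => /= [u' | none].
  case/andP=> u'E /exists_inP[F' F'H /andP[zF' linked_u']].
  have linked_u'F := linked_transfer FH F'H zF zF' u'E linked_u'.
  exact: linked_unique (setD1_shadow FH zF) u'E uE linked_u'F linked_u.
by have /negP := none u; rewrite uE; case; apply/exists_inP; exists F; rewrite ?zF.
Qed.

Lemma vertex_colour_onto (F : {set T}) : F \in H -> vertex_colour @: F = E0.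
Proof.
move=> FH; apply/setP => u; apply/imsetP/idP => [[m mF ->] | uE].
  have [u' u'E linked_u'] := linked_exists (setD1_shadow FH mF).
  by rewrite (vertex_colourE FH mF u'E linked_u').
have [m mF linked_u] := linked_onto FH uE.
by exists m; rewrite ?(vertex_colourE FH mF uE linked_u).
Qed.

End Colouring.
End MinPositiveCodegree.
End CodegreeAtLeastR.
End Hypergraph.

Theorem theorem1p2 (r n : nat) (T : finType) (H : {set {set T}}) :
  3 <= r ->
  (r - 1) * (2 * r + 1) <= 2 * n ->
  #|T| = n ->
  is_rgraph r H ->
  Tr_free r H ->
  min_pos_codeg_gt r H ->
  r_partite r H.
Proof.
move=> r_ge3 + cardT; rewrite -cardT => n_large rgraphH TrfreeH min_codeg.
have r_gt0 : 0 < r by apply: leq_trans r_ge3.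
have codeg_ge e : e \in shadow r H -> r <= #|nbhd H e|.
  by move/min_codeg; move: n_large; clear; nia.
have [H0 | [E0 E0H]] := set_0Vmem H.
  by exists (fun _ => Ordinal r_gt0) => E; rewrite H0 inE.
have [x0 x0E0] : exists x0, x0 \in E0 by apply/card_gt0P; rewrite (rgraphH _ E0H).
apply: (r_partite_of_edge_retraction rgraphH x0E0 (rgraphH _ E0H)) => F FH.
exact: (vertex_colour_onto rgraphH r_gt0 TrfreeH codeg_ge min_codeg E0H FH).
Qed.
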